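(* Let $p$ be a prime, $k>0$ an integer, and $G_{p,k}=C_{p^\infty}\times C_k\times\mathbf{T}$ (a 1-dimensional Lie group). Every closed 1-dimensional subgroup of $G_{p,k}$ is of the form $D\times\mathbf{T}$, where $D$ is a subgroup of $C_{p^\infty}\times C_k$ (and every such set is a closed 1-dimensional subgroup). Moreover, the set of closed 1-dimensional subgroups is closed in $\mathcal{C}(G_{p,k})$, and the map $\pi^*:\mathcal{C}(C_{p^\infty}\times C_k)\to\mathcal{C}(G_{p,k})$, $D\mapsto\pi^{-1}(D)=D\times\mathbf{T}$, is a homeomorphism onto this set.
   Context: $\mathbf{T}$ is the circle group; $C_m\subset\mathbf{T}$ is the group of $m$-th roots of unity; $C_{p^\infty}=\bigcup_{\ell\ge1}C_{p^\ell}$ is the Prüfer $p$-group, with the discrete topology. $\pi:G_{p,k}\to C_{p^\infty}\times C_k$ is the projection onto the first two factors. $\mathcal{C}(G)$ denotes the space of closed subgroups of a locally compact group $G$ with the Chabauty topology, generated by the sets $\{H:H\cap K=\emptyset\}$ ($K$ compact) and $\{H:H\cap U\neq\emptyset\}$ ($U$ open). *)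

From HB Require Import structures.
From mathcomp Require Import all_boot all_order all_algebra.
From mathcomp Require Import all_classical all_reals.
From mathcomp Require Import trigo.
From mathcomp.real_closed Require Import complex.

Set Implicit Arguments.
Unset Strict Implicit.
Unset Printing Implicit Defensive.

Import Order.TTheory GRing.Theory Num.Theory.
Local Open Scope classical_set_scope.
Local Open Scope ring_scope.

(* Generic notions for a "space" given by a carrier set X : set T and   *)
(* a predicate [op] singling out its open subsets.                      *)

Definition compactIn (T : Type) (X : set T) (op : set T -> Prop) (K : set T) :=
  K `<=` X /\
  forall (I : Type) (U : I -> set T), (forall i, op (U i)) ->
    K `<=` \bigcup_(i in setT) U i ->
    exists F : set I, finite_set F /\ K `<=` \bigcup_(i in F) U i.

Definition closedIn (T : Type) (X : set T) (op : set T -> Prop) (F : set T) :=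
  F `<=` X /\ op (X `\` F).

Definition is_subgroup (T : Type) (X : set T) (one : T) (mul : T -> T -> T)
  (inv : T -> T) (H : set T) :=
  [/\ H `<=` X, H one,
      (forall x y, H x -> H y -> H (mul x y)) &
      (forall x, H x -> H (inv x))].

Definition closed_subgroups (T : Type) (X : set T) (op : set T -> Prop)
  (one : T) (mul : T -> T -> T) (inv : T -> T) : set (set T) :=
  [set H | is_subgroup X one mul inv H /\ closedIn X op H].

Definition chabauty_subbasic (T : Type) (X : set T) (op : set T -> Prop)
  (S : set (set T)) :=
  (exists K, compactIn X op K /\ S = [set H | H `&` K = set0]) \/
  (exists U, op U /\ S = [set H | H `&` U !=set0]).

(* Open sets of the topology on the family [C] generated by the         *)
(* (traces on C of the) subbasic sets: unions of finite intersections.  *)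
Definition chabauty_open (T : Type) (X : set T) (op : set T -> Prop)
  (C : set (set T)) (A : set (set T)) :=
  A `<=` C /\
  forall H, A H -> exists F : set (set (set T)), finite_set F /\
    (forall S, F S -> chabauty_subbasic X op S /\ S H) /\
    (forall H', C H' -> (forall S, F S -> S H') -> A H').

Section Groups.
Local Unset Implicit Arguments.
Variable R : realType.
Local Open Scope complex_scope.

Definition circle : set R[i] := [set z | `|z| = 1].
Definition roots_unity (m : nat) : set R[i] := [set z | z ^+ m = 1].
Definition prufer (p : nat) : set R[i] :=
  [set z | exists l : nat, (0 < l)%N /\ roots_unity (p ^ l) z].

Definition D0 (p k : nat) : set (R[i] * R[i]) :=
  [set d | prufer p d.1 /\ roots_unity k d.2].
Definition D0_open (p k : nat) (U : set (R[i] * R[i])) := U `<=` D0 p k.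
Definition D0_one : R[i] * R[i] := (1, 1).
Definition D0_mul (x y : R[i] * R[i]) : R[i] * R[i] := (x.1 * y.1, x.2 * y.2).
Definition D0_inv (x : R[i] * R[i]) : R[i] * R[i] := (x.1^-1, x.2^-1).

Definition Gpk (p k : nat) : set ((R[i] * R[i]) * R[i]) :=
  [set g | D0 p k g.1 /\ circle g.2].
(* product topology: discrete x discrete x circle (metric |z - w|) *)
Definition Gpk_open (p k : nat) (U : set ((R[i] * R[i]) * R[i])) :=
  U `<=` Gpk p k /\
  forall g, U g -> exists e : R, 0 < e /\
    forall w, circle w -> `|w - g.2| < e%:C -> U (g.1, w).
Definition G_one : (R[i] * R[i]) * R[i] := (D0_one, 1).
Definition G_mul (g h : (R[i] * R[i]) * R[i]) : (R[i] * R[i]) * R[i] :=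
  (D0_mul g.1 h.1, g.2 * h.2).
Definition G_inv (g : (R[i] * R[i]) * R[i]) : (R[i] * R[i]) * R[i] :=
  (D0_inv g.1, g.2^-1).

(* Lie algebra of G_{p,k} is R, with exponential map                    *)
(*   exp(X) = (1, 1, e^{2 pi i X}).                                     *)
Definition expG (X : R) : (R[i] * R[i]) * R[i] :=
  (D0_one, cos (2 * pi * X) +i* sin (2 * pi * X)).
Definition lie_algebra (H : set ((R[i] * R[i]) * R[i])) : set R :=
  [set X | forall t : R, H (expG (t * X))].
(* H is 1-dimensional: its Lie algebra (a subspace of R) is nonzero *)
Definition one_dimensional (H : set ((R[i] * R[i]) * R[i])) :=
  exists X, X != 0 /\ lie_algebra H X.

Definition CG (p k : nat) := closed_subgroups (Gpk p k) (@Gpk_open p k) G_one G_mul G_inv.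
Definition CD (p k : nat) := closed_subgroups (D0 p k) (@D0_open p k) D0_one D0_mul D0_inv.

Definition pistar (p k : nat) (D : set (R[i] * R[i])) : set ((R[i] * R[i]) * R[i]) :=
  [set g | Gpk p k g /\ D g.1].

End Groups.

From mathcomp Require Import all_boot all_order all_algebra.
From mathcomp Require Import all_classical all_reals.
From mathcomp.real_closed Require Import complex.
From mathcomp Require Import trigo lra.
Import Order.TTheory GRing.Theory Num.Theory.
Local Open Scope classical_set_scope.
Local Open Scope ring_scope.

Set Implicit Arguments.
Unset Strict Implicit.

(* A subgroup H with nonzero Lie algebra contains exp(R X) = 1 x T, and
   translating by 1 x T shows that H = pi^{-1}(pi H); conversely every
   pi^{-1} D contains 1 x T.  A closed subgroup missing some (1, w) keeps
   missing the compact set {(1, w)} on a Chabauty neighbourhood, so being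
   1-dimensional is a closed condition.  Continuity and openness of pi^* hold
   because each subbasic Chabauty set on one side matches one on the other
   side along pi^*: a compact K and an open U of G correspond to pi(K) and
   pi(U), and a compact K and an open U of the discrete group lift to
   K x {1} and U x T. *)

Lemma finite_set_transfer (A B : Type) (F : set A) (P : B -> Prop)
    (rel : A -> B -> Prop) :
  finite_set F -> (forall a, F a -> exists2 b, P b & rel a b) ->
  exists G : set B, [/\ finite_set G,
    forall b, G b -> P b /\ exists2 a, F a & rel a b &
    forall a, F a -> exists2 b, G b & rel a b].
Proof.
move=> fF hF; have [[a0 Fa0]|F0] := pselect (F !=set0); last first.
  exists set0; split => [|//|a Fa]; first exact: finite_set0.
  by case: F0; exists a.
have [b0 _ _] := hF a0 Fa0.
have : forall a, exists b, F a -> P b /\ rel a b.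
  move=> a; have [Fa|nFa] := pselect (F a); last by exists b0.
  by have [b Pb rab] := hF a Fa; exists b.
case/choice => g hg.
exists (g @` F); split; first exact: finite_image.
  by move=> _ [a Fa <-]; have [Pga rga] := hg a Fa; split => //; exists a.
by move=> a Fa; exists (g a); [exists a | have [] := hg a Fa].
Qed.

Section ChabautyMaps.
Variables (T T' : Type) (X : set T) (op : set T -> Prop).
Variables (X' : set T') (op' : set T' -> Prop).

Lemma compactIn_set1 x : X x -> compactIn X op [set x].
Proof.
move=> Xx; split=> [y -> //|I U _ cov]; have [i _ Ui] := cov x erefl.
by exists [set i]; split=> [|y ->]; [exact: finite_set1 | exists i].
Qed.

Lemma compactIn_image (f : T -> T') K :
  (forall x, X x -> X' (f x)) -> (forall U, op' U -> op (X `&` f @^-1` U)) ->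
  compactIn X op K -> compactIn X' op' (f @` K).
Proof.
move=> fX fop [sK cK]; split=> [_ [x /sK Xx <-]|I U oU cov]; first exact: fX.
have [|F [fF sF]] := cK I (fun i => X `&` f @^-1` U i) (fun i => fop _ (oU i)).
  move=> x Kx; have [i _ Ui] := cov (f x) (ex_intro2 _ _ x Kx erefl).
  by exists i => //; split => //; exact: sK.
by exists F; split => // _ [x /sF [i Fi [_ Ui]] <-]; exists i.
Qed.

Variables (C : set (set T)) (C' : set (set T')) (phi : set T' -> set T).

Lemma chabauty_open_preimage :
  (forall D, C' D -> C (phi D)) ->
  (forall S, chabauty_subbasic X op S -> exists2 S',
     chabauty_subbasic X' op' S' & forall D, C' D -> S' D <-> S (phi D)) ->
  forall A, chabauty_open X op C A ->
  chabauty_open X' op' C' [set D | C' D /\ A (phi D)].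
Proof.
move=> phiC pull A [_ oA]; split=> [D [] //|D [C'D /oA [F [fF [FS FA]]]]].
have [F' [fF' F'S F'F]] := finite_set_transfer
  (rel := fun S S' => forall D, C' D -> S' D <-> S (phi D))
  fF (fun S FS_S => pull S (FS S FS_S).1).
exists F'; split => //; split.
  move=> S' /F'S [sb [S /FS [_ SD] e]]; split => //; exact/e.
move=> D' C'D' F'D'; split => //; apply: FA => [|S /F'F [S' /F'D' ? e]].
  exact: phiC.
exact/e.
Qed.

Lemma chabauty_open_image (Y : set (set T)) :
  Y `<=` C -> chabauty_open X op C (C `\` Y) ->
  (forall D, C' D -> Y (phi D)) ->
  (forall H, Y H -> exists2 D, C' D & phi D = H) ->
  (forall S', chabauty_subbasic X' op' S' -> exists2 S,
     chabauty_subbasic X op S & forall D, C' D -> S (phi D) <-> S' D) ->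
  forall B, chabauty_open X' op' C' B ->
  exists2 A, chabauty_open X op C A & phi @` B = A `&` Y.
Proof.
move=> YC [_ oCY] phiY Yphi push B [sB oB].
exists [set H | C H /\ (Y H -> exists2 D, B D & phi D = H)]; last first.
  apply/seteqP; split=> [_ [D BD <-]|H [[_ BH] /BH [D BD <-]]].
    by have YD := phiY _ (sB _ BD); split => //; split; [exact: YC | exists D].
  by exists D.
split=> [H [] //|H [CH BH]].
have [YH|nYH] := pselect (Y H); last first.
  have [F [fF [FS FA]]] := oCY H (conj CH nYH).
  by exists F; split => //; split => // H' CH' /(FA _ CH') [_ nYH'].
have [D BD DH] := BH YH; have [F' [fF' [F'S F'B]]] := oB D BD.
have [F [fF FS FF']] := finite_set_transfer
  (rel := fun S' S => forall D, C' D -> S (phi D) <-> S' D)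
  fF' (fun S' F'S_S' => push S' (F'S S' F'S_S').1).
exists F; split => //; split.
  move=> S /FS [sb [S' /F'S [_ S'D] e]]; split => //; rewrite -DH.
  by apply/e => //; exact: sB.
move=> H' CH' FH'; split => // /Yphi [D' C'D' DH']; subst H'; exists D' => //.
by apply: F'B => // S' /FF' [S /FH' ? e]; exact/e.
Qed.

End ChabautyMaps.

Section Circle.
Variable R : realType.

Lemma circleC (a b : R) : circle R (Complex a b) <-> a ^+ 2 + b ^+ 2 = 1.
Proof.
rewrite /circle /= normc_def /=; split=> [[] h|->]; last by rewrite sqrtr1.
have h0 : 0 <= a ^+ 2 + b ^+ 2 by rewrite addr_ge0 // sqr_ge0.
by rewrite -(sqr_sqrtr h0) h expr1n.
Qed.

Lemma circle_cos_sin (t : R) : circle R (cos t +i* sin t)%C.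
Proof. by apply/circleC; rewrite cos2Dsin2. Qed.

Lemma circle_cos_sin_surj (z : R[i]) :
  circle R z -> exists t : R, z = (cos t +i* sin t)%C.
Proof.
case: z => a b /circleC h.
have ha : -1 <= a <= 1 by apply/andP; split; nra.
have sin_acos_a : sin (acos a) = `|b|.
  by rewrite sin_acos // -sqrtr_sqr; congr Num.sqrt; lra.
have [b_ge0|b_lt0] := lerP 0 b.
  by exists (acos a); rewrite acosK ?inE // sin_acos_a ger0_norm.
exists (- acos a).
by rewrite cosN sinN acosK ?inE // sin_acos_a ltr0_norm ?opprK.
Qed.

Lemma circle1 : circle R 1.
Proof. by rewrite /circle /= normr1. Qed.

Lemma circleM (a b : R[i]) : circle R a -> circle R b -> circle R (a * b).
Proof. by rewrite /circle /= normrM => -> ->; rewrite mulr1. Qed.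

Lemma circleV (a : R[i]) : circle R a -> circle R a^-1.
Proof. by rewrite /circle /= normfV => ->; rewrite invr1. Qed.

Lemma circle_neq0 (a : R[i]) : circle R a -> a != 0.
Proof. by rewrite /circle /= => a1; rewrite -normr_eq0 a1 oner_neq0. Qed.

End Circle.

Section Gpk.
Variables (R : realType) (p k : nat).

Lemma D0_one_mem : D0 R p k (D0_one R).
Proof. by split; [exists 1%N | ]; rewrite /roots_unity /= expr1n. Qed.

Lemma pistarE D : D `<=` D0 R p k ->
  pistar R p k D = [set g | D g.1 /\ circle R g.2].
Proof.
move=> sD; apply/seteqP; split=> [g [[_ ?] ?] // | g [Dg ?]].
by split => //; split => //; exact: sD.
Qed.

Lemma fst_pistar D : D `<=` D0 R p k -> fst @` pistar R p k D = D.
Proof.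
move=> sD; apply/seteqP; split=> [_ [g [_ Dg] <-] // | d Dd].
by exists (d, 1) => //; split => //; split; [exact: sD | exact: circle1].
Qed.

Lemma pistar_subgroup D :
  is_subgroup (D0 R p k) (D0_one R) (@D0_mul R) (@D0_inv R) D ->
  is_subgroup (Gpk R p k) (G_one R) (@G_mul R) (@G_inv R) (pistar R p k D).
Proof.
case=> sD D1 DM DV.
split=> [g [] // | | x y [[_ x2] Dx] [[_ y2] Dy] | x [[_ x2] Dx]].
- by split; [split; [exact: D0_one_mem | exact: circle1] | ].
- by split; [split; [exact/sD/DM | exact: circleM] | exact: DM].
- by split; [split; [exact/sD/DV | exact: circleV] | exact: DV].
Qed.

Lemma pistar_closed D : closedIn (Gpk R p k) (@Gpk_open R p k) (pistar R p k D).
Proof.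
split=> [g [] // |]; split=> [g [] // | g [Gg nDg]].
exists 1; split=> // w w1 _; split=> [|[_ Dg]]; last exact: nDg.
by split => //; case: Gg.
Qed.

Lemma open_pistar U : D0_open R p k U -> Gpk_open R p k (pistar R p k U).
Proof.
move=> _; split=> [g [] // | g [Gg Ug]].
by exists 1; split=> // w w1 _; split => //; split => //; case: Gg.
Qed.

Lemma pistar_one_dimensional D :
  D (D0_one R) -> one_dimensional R (pistar R p k D).
Proof.
move=> D1; exists 1; split=> [|t]; first exact: oner_neq0.
by split => //; split; [exact: D0_one_mem | exact: circle_cos_sin].
Qed.

Lemma one_dimensional_circle H : one_dimensional R H ->
  forall w, circle R w -> H (D0_one R, w).
Proof.
move=> [X [X0 HX]] w /circle_cos_sin_surj [t ->].
have pi20 : 2 * pi != 0 :> R by rewrite mulf_neq0 ?pnatr_eq0 ?gt_eqF ?pi_gt0.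
by have := HX (t / (2 * pi) / X); rewrite /expG divfK // mulrC divfK.
Qed.

Lemma subgroup_fst H :
  is_subgroup (Gpk R p k) (G_one R) (@G_mul R) (@G_inv R) H ->
  is_subgroup (D0 R p k) (D0_one R) (@D0_mul R) (@D0_inv R) (fst @` H).
Proof.
case=> sH H1 HM HV; split.
- by move=> _ [g /sH [] ? _ <-].
- by exists (G_one R).
- by move=> _ _ [g Hg <-] [h Hh <-]; exists (G_mul R g h); [exact: HM |].
- by move=> _ [g Hg <-]; exists (G_inv R g); [exact: HV |].
Qed.

Lemma pistar_fst H :
  is_subgroup (Gpk R p k) (G_one R) (@G_mul R) (@G_inv R) H ->
  (forall w, circle R w -> H (D0_one R, w)) -> pistar R p k (fst @` H) = H.
Proof.
move=> [sH _ HM _] H1T; apply/seteqP.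
split=> [[d w] [[_ w1] [[d' a] Ha /= dd']] | g Hg].
  subst d'; have [_ a1] := sH _ Ha.
  have := HM _ _ Ha (H1T _ (circleM (circleV a1) w1)).
  rewrite /G_mul /D0_mul /D0_one /= !mulr1 mulrA mulfV ?mul1r.
    by rewrite -surjective_pairing.
  exact: circle_neq0.
by split; [exact: sH | exists g].
Qed.

Lemma CD_subgroupP D : CD R p k D <->
  is_subgroup (D0 R p k) (D0_one R) (@D0_mul R) (@D0_inv R) D.
Proof.
split=> [[] // | sg]; split => //.
by split=> [|d []]; [case: sg | ].
Qed.

Lemma pistar_CG D : CD R p k D ->
  CG R p k (pistar R p k D) /\ one_dimensional R (pistar R p k D).
Proof.
move=> /CD_subgroupP sg; split; last by apply: pistar_one_dimensional; case: sg.
by split; [exact: pistar_subgroup | exact: pistar_closed].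
Qed.

Lemma CG_one_dimensional_pistar H : CG R p k H -> one_dimensional R H ->
  exists2 D, CD R p k D & pistar R p k D = H.
Proof.
move=> [sg _] /one_dimensional_circle H1T.
exists (fst @` H); last exact: pistar_fst.
exact/CD_subgroupP/subgroup_fst.
Qed.

Lemma pistar_inj D D' : CD R p k D -> CD R p k D' ->
  pistar R p k D = pistar R p k D' -> D = D'.
Proof.
move=> [[sD _ _ _] _] [[sD' _ _ _] _] eD.
by rewrite -(fst_pistar sD) eD fst_pistar.
Qed.

Lemma CG_one_dimensionalP H : CG R p k H /\ one_dimensional R H <->
  exists D, is_subgroup (D0 R p k) (D0_one R) (@D0_mul R) (@D0_inv R) D /\
            H = [set g | D g.1 /\ circle R g.2].
Proof.
split=> [[CH /(CG_one_dimensional_pistar CH) [D /CD_subgroupP sg <-]]|[D [sg ->]]].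
  by exists D; split; last by rewrite pistarE //; case: sg.
by rewrite -pistarE; [exact/pistar_CG/CD_subgroupP | case: sg].
Qed.

Lemma chabauty_subbasic_pistar_preimage S :
  chabauty_subbasic (Gpk R p k) (@Gpk_open R p k) S ->
  exists2 S', chabauty_subbasic (D0 R p k) (@D0_open R p k) S' &
    forall D, CD R p k D -> S' D <-> S (pistar R p k D).
Proof.
case=> [[K [cK ->]] | [U [[sU _] ->]]].
  exists [set D | D `&` fst @` K = set0].
    left; exists (fst @` K); split => //.
    by apply: compactIn_image cK => [g [] // | U /open_pistar].
  move=> D _; rewrite /= !disjoints_subset.
  split=> [DK g [_ Dg] Kg | pK d Dd [g Kg gd]].
    by apply: (DK _ Dg); exists g.
  by apply: (pK g _ Kg); split; [exact: (proj1 cK g Kg) | rewrite gd].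
exists [set D | D `&` fst @` U !=set0].
  by right; exists (fst @` U); split=> // _ [g /sU [] ? _ <-].
move=> D _; split=> [[d [Dd [g Ug gd]]] | [g [[_ Dg] Ug]]].
  by exists g; split => //; split; [exact: sU | rewrite gd].
by exists g.1; split => //; exists g.
Qed.

Lemma chabauty_subbasic_pistar_image S' :
  chabauty_subbasic (D0 R p k) (@D0_open R p k) S' ->
  exists2 S, chabauty_subbasic (Gpk R p k) (@Gpk_open R p k) S &
    forall D, CD R p k D -> S (pistar R p k D) <-> S' D.
Proof.
have G1 D d : D `<=` D0 R p k -> D d -> pistar R p k D (d, 1).
  by move=> sD Dd; split => //; split; [exact: sD | exact: circle1].
case=> [[K [cK ->]] | [U [oU ->]]].
  exists [set H | H `&` (fun d => (d, 1)) @` K = set0].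
    left; eexists; split; last reflexivity.
    apply: compactIn_image cK => [d D0d | U _ d []//].
    by split => //; exact: circle1.
  move=> D [[sD _ _ _] _]; rewrite /= !disjoints_subset.
  split=> [pK d Dd Kd | DK g [_ Dg] [d Kd gd]].
    by apply: (pK (d, 1)); [exact: G1 | exists d].
  by apply: (DK d _ Kd); rewrite -gd in Dg.
exists [set H | H `&` pistar R p k U !=set0].
  by right; exists (pistar R p k U); split=> //; exact: open_pistar.
move=> D [[sD _ _ _] _].
split=> [[g [[_ Dg] [_ Ug]]] | [d [Dd Ud]]]; first by exists g.1.
by exists (d, 1); split; [exact: G1 | exact: G1 oU Ud].
Qed.

Lemma chabauty_open_not_one_dimensional :
  chabauty_open (Gpk R p k) (@Gpk_open R p k) (CG R p k)
    (CG R p k `\` [set H | CG R p k H /\ one_dimensional R H]).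
Proof.
split=> [H [] // | H [CH nH]].
have [w [w1 nHw]] : exists w, circle R w /\ ~ H (D0_one R, w).
  apply: contra_notP nH => H1T; split => //; exists 1; split=> [|t].
    exact: oner_neq0.
  apply: contrapT => nHt; apply: H1T; exists (expG R (t * 1)).2.
  by split => //; exact: circle_cos_sin.
pose S := [set H' | H' `&` [set (D0_one R, w)] = set0].
exists [set S]; split; first exact: finite_set1.
split=> [_ -> | H' CH' /(_ S erefl) /disjoints_subset H'S].
  split; last by apply/disjoints_subset => g Hg gE; apply: nHw; rewrite -gE.
  left; exists [set (D0_one R, w)]; split => //.
  by apply: compactIn_set1; split => //; exact: D0_one_mem.
split=> // -[_ /one_dimensional_circle /(_ w w1) H'w].
exact: H'S H'w erefl.
Qed.

End Gpk.

Theorem lemma8 (R : realType) (p k : nat) (hp : prime p) (hk : (0 < k)%N) :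
  (* closed 1-dimensional subgroups are exactly the D x T *)
  (forall H : set ((R[i] * R[i]) * R[i]),
     (CG R p k H /\ one_dimensional R H) <->
     (exists D, is_subgroup (D0 R p k) (D0_one R) (@D0_mul R) (@D0_inv R) D /\
                H = [set g | D g.1 /\ circle R g.2])) /\
  (* the set of closed 1-dimensional subgroups is closed in C(G) *)
  chabauty_open (Gpk R p k) (@Gpk_open R p k) (CG R p k)
    (CG R p k `\` [set H | CG R p k H /\ one_dimensional R H]) /\
  (* pi^* maps C(D0) bijectively onto that set ... *)
  (forall D, CD R p k D -> CG R p k (pistar R p k D) /\ one_dimensional R (pistar R p k D)) /\
  (forall H, CG R p k H -> one_dimensional R H -> exists2 D, CD R p k D & pistar R p k D = H) /\
  (forall D D', CD R p k D -> CD R p k D' -> pistar R p k D = pistar R p k D' -> D = D') /\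
  (* ... continuously ... *)
  (forall A, chabauty_open (Gpk R p k) (@Gpk_open R p k) (CG R p k) A ->
     chabauty_open (D0 R p k) (@D0_open R p k) (CD R p k)
       [set D | CD R p k D /\ A (pistar R p k D)]) /\
  (* ... and openly onto its image (with the subspace topology) *)
  (forall B, chabauty_open (D0 R p k) (@D0_open R p k) (CD R p k) B ->
     exists2 A, chabauty_open (Gpk R p k) (@Gpk_open R p k) (CG R p k) A &
       pistar R p k @` B = A `&` [set H | CG R p k H /\ one_dimensional R H]).
Proof.
split; first exact: CG_one_dimensionalP.
split; first exact: chabauty_open_not_one_dimensional.
split; first exact: pistar_CG.
split; first exact: CG_one_dimensional_pistar.
split; first exact: pistar_inj.
split.
  apply: chabauty_open_preimage => [D /pistar_CG [] // | S].
  exact: chabauty_subbasic_pistar_preimage.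
apply: chabauty_open_image.
- by move=> H [].
- exact: chabauty_open_not_one_dimensional.
- exact: pistar_CG.
- by move=> H [CH /(CG_one_dimensional_pistar CH)].
- exact: chabauty_subbasic_pistar_image.
Qed.
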